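(* For an integer $n\ge 4$, let $f(n)$ be the minimum number of edges of a finite simple edge-pancyclic graph of order $n$ having at least one edge. Then $$\frac{3n}{2}\le f(n)\le 2n-2 .$$
   Context: A $k$-cycle is a cycle of length $k$. A graph $G$ of order $n$ is edge-pancyclic if for every integer $k$ with $3\le k\le n$, every edge of $G$ lies in a $k$-cycle. Edgeless graphs, which are vacuously edge-pancyclic, are excluded. *)

From mathcomp Require Import all_boot.
Set Implicit Arguments. Unset Strict Implicit. Unset Printing Implicit Defensive.

Definition simple_graph (T : finType) (e : rel T) : Prop :=
  symmetric e /\ irreflexive e.

Definition edge_set (T : finType) (e : rel T) : {set {set T}} :=
  [set x : {set T} | [exists u, exists v, e u v && (x == [set u; v])]].

Definition num_edges (T : finType) (e : rel T) : nat := #|edge_set e|.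

Definition edge_in_k_cycle (T : finType) (e : rel T) (k : nat) (u v : T) : Prop :=
  exists s : seq T,
    [/\ size s = k, uniq s, cycle e s, u \in s & (next s u == v) || (next s v == u)].

Definition edge_pancyclic (T : finType) (e : rel T) : Prop :=
  forall k, 3 <= k <= #|T| -> forall u v, e u v -> edge_in_k_cycle e k u v.

(* Lower bound: every vertex x has degree at least 3.  A Hamiltonian cycle
   through any edge gives two distinct neighbours a, b of x.  If these were
   all, the triangle through the edge xa would have to be xab, so ab is an
   edge; a Hamiltonian cycle through ab then passes through x with cycle
   neighbours a and b, so a, x, b would close a triangle inside a cycle of
   length n >= 4, which is absurd.  The handshake lemma gives 2|E| >= 3n.
   Upper bound: the wheel with hub 0 and rim 1..n-1 has 2n - 2 edges, and
   every edge lies on a k-cycle formed by the hub and k - 1 consecutive rim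
   vertices. *)

From mathcomp Require Import all_boot zify.
Set Implicit Arguments. Unset Strict Implicit. Unset Printing Implicit Defensive.

Section CycleNeighbours.
Variable T : eqType.
Implicit Types (x : T) (r s : seq T).

Lemma iter_next_cons x s i : uniq (x :: s) -> i < size (x :: s) ->
  iter i (next (x :: s)) x = nth x (x :: s) i.
Proof.
move=> Uxs; elim: i => [//|i IHi] lt_i.
rewrite iterS IHi 1?ltnW // next_nth mem_nth 1?ltnW //.
by rewrite index_uniq 1?ltnW //; apply: set_nth_default.
Qed.

Lemma iter_next_neq r x i : uniq r -> x \in r -> 0 < i < size r ->
  iter i (next r) x != x.
Proof.
move=> Ur /rot_to[j s rot_r] /andP[i_gt0 lt_i].
have Uxs : uniq (x :: s) by rewrite -rot_r rot_uniq.
have lt_i' : i < size (x :: s) by rewrite -rot_r size_rot.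
rewrite -(eq_iter (next_rot j Ur)) rot_r iter_next_cons //.
by rewrite (nth_uniq x lt_i' (_ : 0 < _)) // -lt0n.
Qed.

Lemma cycle_neighbours (e : rel T) r x : uniq r -> 3 <= size r -> cycle e r ->
  x \in r -> [/\ e x (next r x), e (prev r x) x & next r x != prev r x].
Proof.
move=> Ur r_ge3 cycle_r r_x; split; [exact: next_cycle | exact: prev_cycle |].
apply: contraTneq (iter_next_neq (i := 2) Ur r_x r_ge3) => next_eq_prev.
by rewrite negbK !iterS next_eq_prev next_prev.
Qed.

Definition consecutive r : rel T := fun u v => (next r u == v) || (next r v == u).

Lemma consecutiveC r : symmetric (consecutive r).
Proof. by move=> u v; rewrite /consecutive orbC. Qed.

Lemma cycle_neighbours_not_consecutive r x : uniq r -> 3 < size r -> x \in r ->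
  ~~ consecutive r (next r x) (prev r x).
Proof.
move=> Ur r_gt3 r_x; rewrite /consecutive next_prev //; apply/norP; split.
  apply: contraTneq (iter_next_neq (i := 3) Ur r_x r_gt3) => next2_eq_prev.
  by rewrite negbK !iterS next2_eq_prev next_prev.
by rewrite eq_sym; exact: (iter_next_neq (i := 1) Ur r_x (ltnW (ltnW r_gt3))).
Qed.

Lemma symmetric_pair (r : rel T) a b p q : symmetric r -> p != q ->
  (p == a) || (p == b) -> (q == a) || (q == b) -> r p q = r a b.
Proof.
move=> r_sym neq_pq /orP[]/eqP p_eq /orP[]/eqP q_eq;
  subst p q; rewrite ?eqxx // in neq_pq *; exact: r_sym.
Qed.

Lemma triangle_neighbours (e : rel T) s x :
  symmetric e -> size s = 3 -> uniq s -> cycle e s -> x \in s ->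
  exists p q, [/\ p != q, e x p, e x q & e p q].
Proof.
move=> e_sym; case: s => [|a [|b [|c []]]] //= _.
rewrite !inE !andbT negb_or => /andP[/andP[ab ac] bc] /and3P[eab ebc eca].
case/or3P=> /eqP->.
- by exists b, c; rewrite bc eab ebc e_sym.
- by exists c, a; rewrite eq_sym ac ebc e_sym eab eca.
- by exists a, b; rewrite ab eca e_sym ebc eab.
Qed.

End CycleNeighbours.

Lemma full_uniq_mem (T : finType) (s : seq T) x :
  uniq s -> size s = #|T| -> x \in s.
Proof.
move=> Us size_s; have /subset_cardP/(_ (subset_predT _)) s_full : #|s| = #|T|.
  by rewrite (card_uniqP Us).
by rewrite s_full.
Qed.

Lemma edge_set_edge (T : finType) (e : rel T) u v :
  e u v -> [set u; v] \in edge_set e.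
Proof.
by move=> euv; rewrite inE; apply/existsP; exists u; apply/existsP; exists v;
  rewrite euv eqxx.
Qed.

Lemma num_edges_gt0P (T : finType) (e : rel T) :
  reflect (exists u v, e u v) (0 < num_edges e).
Proof.
apply: (iffP card_gt0P) => [[E]|[u [v /edge_set_edge]]]; last by exists [set u; v].
by rewrite inE => /existsP[u /existsP[v /andP[euv _]]]; exists u, v.
Qed.

Lemma edge_in_k_cycleC (T : finType) (e : rel T) k u v :
  edge_in_k_cycle e k u v -> edge_in_k_cycle e k v u.
Proof.
move=> [s [s_size s_uniq s_cycle s_u s_uv]]; exists s; split; rewrite 1?orbC //.
by case/orP: s_uv => /eqP uv; [rewrite -uv mem_next | rewrite -mem_next uv].
Qed.

Lemma edge_in_k_cycle_val n (r : rel nat) k (u v : 'I_n.+1) (s : seq nat) :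
  all (leq^~ n) s -> size s = k -> uniq s -> cycle r s -> val u \in s ->
  next s (val u) = val v -> edge_in_k_cycle (relpre val r) k u v.
Proof.
move=> s_le s_size s_uniq s_cycle s_u s_uv.
have s_val : map val (map (@inord n) s) = s.
  by rewrite -map_comp map_id_in // => x /(allP s_le) /= x_le; apply: inordK.
have s'_uniq : uniq (map (@inord n) s) by rewrite -(map_inj_uniq val_inj) s_val.
exists (map inord s); split => //.
- by rewrite size_map.
- by rewrite -cycle_map s_val.
- by rewrite -(mem_map val_inj) s_val.
- by rewrite -(inj_eq val_inj) /= -(next_map val_inj) // s_val s_uv eqxx.
Qed.

Section SimpleGraph.
Variables (T : finType) (e : rel T).
Hypothesis e_simple : simple_graph e.

Let e_sym : symmetric e. Proof. by case: e_simple. Qed.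
Let e_irr : irreflexive e. Proof. by case: e_simple. Qed.

Definition deg x := #|[set y | e x y]|.

Lemma card_edge E : E \in edge_set e -> #|E| = 2.
Proof.
rewrite inE => /existsP[u /existsP[v /andP[euv /eqP->]]].
by rewrite cards2; case: eqP euv => [->|]; rewrite ?e_irr.
Qed.

Lemma edges_at x :
  [set E in edge_set e | x \in E] = [set [set x; y] | y in [set y | e x y]].
Proof.
apply/setP=> E; rewrite in_set; apply/andP/imsetP => [[]|[y]].
  rewrite inE => /existsP[u /existsP[v /andP[euv /eqP->]]] /set2P[]->.
    by exists v; rewrite ?inE.
  by exists u; rewrite ?inE 1?e_sym // setUC.
by rewrite inE => exy ->; split; [exact: edge_set_edge | exact: set21].
Qed.

Lemma card_edges_at x : #|[set E in edge_set e | x \in E]| = deg x.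
Proof.
rewrite edges_at card_in_imset // => y z; rewrite !inE => exy exz eq_xy_xz.
have /set2P[xz|//] : y \in [set x; z] by rewrite -eq_xy_xz set22.
by rewrite xz e_irr in exy.
Qed.

Lemma handshake : \sum_x deg x = 2 * num_edges e.
Proof.
have incidences x : deg x = \sum_(E in edge_set e) (x \in E).
  rewrite -card_edges_at -sum1_card big_mkcond [RHS]big_mkcond /=.
  by apply: eq_bigr => E _; rewrite inE; case: (E \in _).
rewrite (eq_bigr _ (fun x _ => incidences x)) exchange_big /=.
rewrite /num_edges mulnC -sum_nat_const.
apply: eq_bigr => E E_edge; rewrite -(card_edge E_edge) -sum1_card [RHS]big_mkcond.
by apply: eq_bigr => x _; case: (x \in E).
Qed.

Section EdgePancyclic.
Hypotheses (T_gt3 : 3 < #|T|) (e_pan : edge_pancyclic e).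

Lemma hamiltonian_cycle u v : e u v ->
  exists s, [/\ size s = #|T|, uniq s, cycle e s & consecutive s u v].
Proof.
move=> euv; have T_range : 3 <= #|T| <= #|T| by rewrite leqnn ltnW.
by have [s [? ? ? _ ?]] := e_pan T_range euv; exists s.
Qed.

Lemma three_le_deg u v x : e u v -> 3 <= deg x.
Proof.
move=> /hamiltonian_cycle[r [r_size r_uniq r_cycle _]].
have r_x := full_uniq_mem x r_uniq r_size.
have r_ge3 : 3 <= size r by rewrite r_size ltnW.
have [exa ebx a_neq_b] := cycle_neighbours r_uniq r_ge3 r_cycle r_x.
set a := next r x in exa a_neq_b; set b := prev r x in ebx a_neq_b.
rewrite leqNgt; apply/negP => deg_lt3.
have nbhd_x y : e x y -> (y == a) || (y == b).
  have /eqP nbhd_ab : [set a; b] == [set y | e x y].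
    rewrite eqEcard cards2 a_neq_b -ltnS deg_lt3 andbT.
    by apply/subsetP => z /set2P[]->; rewrite inE // e_sym.
  by rewrite -in_set2 nbhd_ab inE.
have eab : e a b.
  have [s [s_size s_uniq s_cycle s_x _]] :=
    e_pan (ltnW T_gt3 : 3 <= 3 <= #|T|) exa.
  have [p [q [p_neq_q exp exq epq]]] :=
    triangle_neighbours e_sym s_size s_uniq s_cycle s_x.
  by rewrite -(symmetric_pair e_sym p_neq_q (nbhd_x _ exp) (nbhd_x _ exq)).
have [t [t_size t_uniq t_cycle t_ab]] := hamiltonian_cycle eab.
have t_x := full_uniq_mem x t_uniq t_size.
have t_gt3 : 3 < size t by rewrite t_size.
have [exn epx n_neq_p] := cycle_neighbours t_uniq (ltnW t_gt3) t_cycle t_x.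
have := cycle_neighbours_not_consecutive t_uniq t_gt3 t_x.
rewrite e_sym in epx.
rewrite (symmetric_pair (consecutiveC t) n_neq_p (nbhd_x _ exn) (nbhd_x _ epx)).
by rewrite t_ab.
Qed.

Lemma edge_pancyclic_num_edges u v : e u v -> 3 * #|T| <= 2 * num_edges e.
Proof.
move=> euv; rewrite -handshake mulnC -sum_nat_const.
by apply: leq_sum => x _; exact: three_le_deg euv.
Qed.

End EdgePancyclic.
End SimpleGraph.

(* The wheel on 'I_m.+1 has hub 0 and rim 1..m, with [rim_succ m] the cyclic
   successor on the rim.  [rim m p i] is the i-th rim vertex after p.+1, and
   [wheel_cycle m p k] is the hub followed by the k - 1 consecutive rim
   vertices starting at p.+1. *)
Definition rim_succ m x := (x %% m).+1.
Definition rim m p i := rim_succ m (p + i).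

Definition wheel_adj m : rel nat := fun x y =>
  (x != y) && [|| x == 0, y == 0, y == rim_succ m x | x == rim_succ m y].

Definition wheel m : rel 'I_m.+1 := relpre val (wheel_adj m).
Arguments wheel m : clear implicits.

Definition wheel_cycle m p k := 0 :: mkseq (rim m p) k.-1.

Definition wheel_step m p : rel nat := fun x y =>
  ((x == 0) && (y == rim m p 0)) || ((x == rim m p 0) && (y == rim m p 1)).

Section Wheel.
Variable m : nat.
Hypothesis m_gt1 : 1 < m.

Lemma rim_succ_rim p i : rim_succ m (rim m p i) = rim m p i.+1.
Proof. by rewrite /rim /rim_succ -[((p + i) %% m).+1]addn1 modnDml addn1 addnS. Qed.

Lemma rim_le p i : rim m p i <= m.
Proof. by rewrite /rim /rim_succ ltn_pmod // ltnW. Qed.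

Lemma wheel_adj_sym : symmetric (wheel_adj m).
Proof.
move=> x y; rewrite /wheel_adj eq_sym orbA [(x == 0) || _]orbC -orbA.
by rewrite [(y == rim_succ m x) || _]orbC.
Qed.

Lemma wheel_adj_rim p i : wheel_adj m (rim m p i) (rim m p i.+1).
Proof.
rewrite /wheel_adj -rim_succ_rim eqxx !orbT andbT /rim_succ.
have := rim_le p i; rewrite /rim /rim_succ; set x := (p + i) %% m => lt_x.
case: (ltngtP x.+1 m) => [lt_x1|lt_x1|x1_eq].
- by rewrite modn_small // ltn_eqF.
- by rewrite ltnS leqNgt lt_x in lt_x1.
- by rewrite x1_eq modnn gtn_eqF.
Qed.

Lemma path_rim p a l : path (wheel_adj m) (rim m p a) (map (rim m p) (iota a.+1 l)).
Proof. by elim: l a => [//|l IHl] a /=; rewrite wheel_adj_rim IHl. Qed.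

Lemma wheel_cycle_cycle p k : 3 <= k -> cycle (wheel_adj m) (wheel_cycle m p k).
Proof.
case: k => [|[|[|k]]] // _; rewrite /wheel_cycle /mkseq /= rcons_path path_rim.
by rewrite wheel_adj_rim last_map.
Qed.

Lemma wheel_cycle_uniq p k : k <= m.+1 -> uniq (wheel_cycle m p k).
Proof.
move=> le_k_m; rewrite /= map_inj_in_uniq ?iota_uniq ?andbT.
  by apply/mapP => -[].
have lt_m i : i \in iota 0 k.-1 -> i < m by rewrite mem_iota; lia.
move=> i j /lt_m lt_i /lt_m lt_j; rewrite /rim /rim_succ => -[] /eqP.
by rewrite eqn_modDl !modn_small // => /eqP.
Qed.

Lemma size_wheel_cycle p k : 0 < k -> size (wheel_cycle m p k) = k.
Proof. by case: k => // k _; rewrite /= size_mkseq. Qed.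

Lemma wheel_cycle_le p k : all (leq^~ m) (wheel_cycle m p k).
Proof. by apply/allP => x /[!inE] /predU1P[->//|/mapP[i _ ->]]; apply: rim_le. Qed.

Lemma wheel_step_next p k x y : 3 <= k -> wheel_step m p x y ->
  x \in wheel_cycle m p k /\ next (wheel_cycle m p k) x = y.
Proof.
case: k => [|[|[|k]]] // _; rewrite /wheel_cycle /mkseq /=.
by case/orP=> /andP[/eqP-> /eqP->]; rewrite !inE eqxx ?orbT.
Qed.

Lemma rim_pred x : 0 < x <= m -> rim m x.-1 0 = x /\ rim m x.-1 1 = rim_succ m x.
Proof.
case/andP=> x_gt0 x_le_m; rewrite /rim /rim_succ addn0 addn1 prednK //.
by rewrite modn_small ?prednK // -ltnS prednK.
Qed.

Lemma wheel_step_spoke y : 0 < y <= m -> wheel_step m y.-1 0 y.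
Proof. by move/rim_pred=> [y_eq _]; rewrite /wheel_step y_eq !eqxx. Qed.

Lemma wheel_step_rim x : 0 < x <= m -> wheel_step m x.-1 x (rim_succ m x).
Proof.
by move/rim_pred=> [x_eq x1_eq]; rewrite /wheel_step x_eq x1_eq !eqxx orbT.
Qed.

Lemma wheel_adjP x y : x <= m -> y <= m -> wheel_adj m x y ->
  exists2 p, p < m & wheel_step m p x y || wheel_step m p y x.
Proof.
have pred_lt z : 0 < z -> z <= m -> z.-1 < m by move=> z_gt0; rewrite prednK.
move=> x_le_m y_le_m /andP[x_neq_y].
have [x0|x_gt0] := posnP x; have [y0|y_gt0] := posnP y.
- by rewrite x0 y0 in x_neq_y.
- by exists y.-1; rewrite ?pred_lt // x0 wheel_step_spoke ?y_gt0.
- by exists x.-1; rewrite ?pred_lt // y0 wheel_step_spoke ?x_gt0 ?orbT.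
rewrite /= => /orP[]/eqP->.
- by exists x.-1; rewrite ?pred_lt // wheel_step_rim ?x_gt0.
- by exists y.-1; rewrite ?pred_lt // wheel_step_rim ?y_gt0 ?orbT.
Qed.

Lemma wheel_ordP (u v : 'I_m.+1) : wheel m u v ->
  exists2 p, p < m & wheel_step m p u v || wheel_step m p v u.
Proof. exact: wheel_adjP (ltnSE (ltn_ord u)) (ltnSE (ltn_ord v)). Qed.

Lemma wheel_simple : simple_graph (wheel m).
Proof.
by split=> [x y | x]; [apply: wheel_adj_sym | rewrite /wheel /= /wheel_adj eqxx].
Qed.

Lemma wheel_hub_spoke : wheel m ord0 (inord 1).
Proof. by rewrite /wheel /= inordK // ltnS ltnW. Qed.

Lemma wheel_step_in_cycle p k (u v : 'I_m.+1) : 3 <= k <= m.+1 ->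
  wheel_step m p u v -> edge_in_k_cycle (wheel m) k u v.
Proof.
case/andP=> k_ge3 k_le step; have [s_u s_uv] := wheel_step_next k_ge3 step.
apply: (edge_in_k_cycle_val (wheel_cycle_le _ _) _ _ _ s_u s_uv).
- by rewrite size_wheel_cycle // ltnW // ltnW.
- exact: wheel_cycle_uniq.
- exact: wheel_cycle_cycle.
Qed.

Lemma wheel_edge_pancyclic : edge_pancyclic (wheel m).
Proof.
move=> k; rewrite card_ord => k_range u v /wheel_ordP[p _ /orP[] step].
  exact: wheel_step_in_cycle step.
by apply: edge_in_k_cycleC; apply: wheel_step_in_cycle step.
Qed.

Lemma num_edges_wheel : num_edges (wheel m) <= 2 * m.
Proof.
pose spoke_or_rim (pb : 'I_m * bool) : {set 'I_m.+1} := if pb.2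
  then [set inord 0; inord (rim m pb.1 0)]
  else [set inord (rim m pb.1 0); inord (rim m pb.1 1)].
have step_edge p (u v : 'I_m.+1) : p < m -> wheel_step m p u v ->
    [set u; v] \in spoke_or_rim @: [set: 'I_m * bool].
  move=> p_lt step; rewrite -[u]inord_val -[v]inord_val.
  case/orP: step => /andP[/eqP-> /eqP->].
  - by apply/imsetP; exists (Ordinal p_lt, true).
  - by apply/imsetP; exists (Ordinal p_lt, false).
have edges_sub : edge_set (wheel m) \subset spoke_or_rim @: [set: 'I_m * bool].
  apply/subsetP => E /[!inE] /existsP[u /existsP[v /andP[uv /eqP->]]].
  have [p p_lt /orP[] step] := wheel_ordP uv.
    exact: step_edge step.
  by rewrite setUC; apply: step_edge step.
apply: leq_trans (subset_leq_card edges_sub) _.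
apply: leq_trans (leq_imset_card _ _) _.
by rewrite cardsT card_prod card_ord card_bool mulnC.
Qed.

End Wheel.

Theorem theorem4 (n : nat) : 4 <= n ->
  (forall (T : finType) (e : rel T),
      #|T| = n -> simple_graph e -> 0 < num_edges e -> edge_pancyclic e ->
      3 * n <= 2 * num_edges e) /\
  (exists e : rel 'I_n,
      [/\ simple_graph e, 0 < num_edges e, edge_pancyclic e &
          num_edges e <= 2 * n - 2]).
Proof.
move=> n_ge4; split.
  move=> T e card_T e_simple /num_edges_gt0P[u [v euv]] e_pan.
  have T_gt3 : 3 < #|T| by rewrite card_T.
  by rewrite -card_T (edge_pancyclic_num_edges e_simple T_gt3 e_pan euv).
case: n n_ge4 => [//|m] m_ge3; have m_gt1 : 1 < m by rewrite ltnW.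
exists (wheel m); split.
- exact: wheel_simple.
- by apply/num_edges_gt0P; exists ord0, (inord 1); apply: wheel_hub_spoke.
- exact: wheel_edge_pancyclic.
- by rewrite (leq_trans (num_edges_wheel m)) // mulnS addSn subn2.
Qed.
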